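(* Let $F=(C_1,\dots,C_m)$ be a flag of almost affine codes of length $n$ over a finite alphabet $A$, and let $r_i$ be the rank function of the matroid associated to $C_i$. Then $(E,\rho_F)$, where $E=\{1,\dots,n\}$ and $\rho_F(X)=\sum_{i=1}^m(-1)^{i+1}r_i(X)$, is a demi-matroid.
   Context: An almost affine code over a finite alphabet $A$ of length $n$ and dimension $k$ is a subset $C\subseteq A^n$ with $|C|=|A|^k$ such that for every $X\subseteq E=\{1,\dots,n\}$, $\log_{|A|}|C_X|$ is a nonnegative integer, where $C_X$ is the projection of $C$ onto the coordinates in $X$; its associated matroid has rank function $r(X)=\log_{|A|}|C_X|$. An almost affine subcode of $C$ is a subset of $C$ that is itself an almost affine code over the same alphabet. A flag of almost affine codes is a sequence $(C_1,\dots,C_m)$ of almost affine codes over the same alphabet and of the same length such that $C_{j+1}$ is an almost affine subcode of $C_j$ for $1\le j\le m-1$. A demi-matroid is a pair $(E,r)$ with $r:2^E\to\mathbb{N}$ satisfying $r(\emptyset)=0$ and $r(X)\le r(X\cup\{x\})\le r(X)+1$ for all $X\subseteq E$, $x\in E$. *)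

From HB Require Import structures.
From mathcomp Require Import all_boot all_order all_algebra.
Set Implicit Arguments. Unset Strict Implicit. Unset Printing Implicit Defensive.
Import GRing.Theory Num.Theory.

(* Words of length n over the alphabet A, coordinates E = 'I_n (i.e. {1..n}). *)
Definition word (A : finType) (n : nat) := {ffun 'I_n -> A}.

(* Projection C_X of a code onto the coordinates in X: each codeword is
   restricted to X (coordinates outside X are erased to None). *)
Definition proj (A : finType) (n : nat) (C : {set word A n}) (X : {set 'I_n})
  : {set {ffun 'I_n -> option A}} :=
  [set [ffun i => if i \in X then Some (c i) else None] | c : word A n in C].

Definition almost_affine_dim (A : finType) (n k : nat) (C : {set word A n}) : Prop :=
  #|C| = (#|A| ^ k)%N /\ forall X : {set 'I_n}, exists r : nat, #|proj C X| = (#|A| ^ r)%N.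

Definition almost_affine (A : finType) (n : nat) (C : {set word A n}) : Prop :=
  exists k, almost_affine_dim k C.

Definition code_rank (A : finType) (n : nat) (C : {set word A n}) (X : {set 'I_n}) : nat :=
  trunc_log #|A| #|proj C X|.

Definition almost_affine_subcode (A : finType) (n : nat) (D C : {set word A n}) : Prop :=
  [/\ almost_affine C, almost_affine D & D \subset C].

Definition flag (A : finType) (n m : nat) (C : nat -> {set word A n}) : Prop :=
  (forall i, (1 <= i <= m)%N -> almost_affine (C i)) /\
  (forall j, (1 <= j)%N -> (j < m)%N -> almost_affine_subcode (C j.+1) (C j)).

Definition flag_rho (A : finType) (n m : nat) (C : nat -> {set word A n})
  (X : {set 'I_n}) : int :=
  (\sum_(1 <= i < m.+1) (-1) ^+ i.+1 * (code_rank (C i) X)%:Z)%R.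

(* Demi-matroid on E = 'I_n with an integer-valued function that must be
   N-valued (nonnegative). *)
Definition demi_matroid (n : nat) (r : {set 'I_n} -> int) : Prop :=
  [/\ forall X, (0 <= r X)%R,
      r set0 = 0%R &
      forall (X : {set 'I_n}) (x : 'I_n),
        (r X <= r (x |: X))%R /\ (r (x |: X) <= r X + 1)%R].

From HB Require Import structures.
From mathcomp Require Import all_boot all_order all_algebra.
From mathcomp Require Import zify.
Set Implicit Arguments. Unset Strict Implicit. Unset Printing Implicit Defensive.
Import Order.TTheory GRing.Theory Num.Theory.

(* Adding a coordinate x to X raises the rank r_i of each code by 0 or 1, and
   if it leaves r_i unchanged, projecting C_i onto X is injective on C_(i+1),
   so it leaves r_(i+1) unchanged too.  Hence both r_i(X) and the gains
   r_i(x X) - r_i(X) are nonincreasing in i, and an alternating sum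
   a_1 - a_2 + a_3 - ... of a nonincreasing nonnegative sequence lies in
   [0, a_1]. *)

Section CodeRank.
Variables (A : finType) (n : nat).
Implicit Types (C D : {set word A n}) (X : {set 'I_n}) (x : 'I_n).

Definition restrict X (f : {ffun 'I_n -> option A}) : {ffun 'I_n -> option A} :=
  [ffun i => if i \in X then f i else None].

Lemma proj_setU1 C X x : proj C X = restrict X @: proj C (x |: X).
Proof.
rewrite /proj -imset_comp; apply: eq_imset => c /=.
apply/ffunP => i; rewrite !ffunE; case: (boolP (i \in X)) => // iX.
by rewrite in_setU1 iX orbT.
Qed.

Lemma projS C D X : D \subset C -> proj D X \subset proj C X.
Proof. exact: imsetS. Qed.

Lemma card_proj_setU1_ge C X x : #|proj C X| <= #|proj C (x |: X)|.
Proof. by rewrite (proj_setU1 C X x) leq_imset_card. Qed.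

(* A word of C_(x X) is determined by its restriction to X and its x-entry. *)
Lemma card_proj_setU1_le C X x : #|proj C (x |: X)| <= #|A| * #|proj C X|.
Proof.
pose glue (p : {ffun 'I_n -> option A} * A) : {ffun 'I_n -> option A} :=
  [ffun i => if i == x then Some p.2 else p.1 i].
pose split_at (c : word A n) := ([ffun i => if i \in X then Some (c i) else None], c x).
have -> : proj C (x |: X) = glue @: (split_at @: C).
  rewrite /proj -imset_comp; apply: eq_imset => c /=.
  apply/ffunP => i; rewrite !ffunE /= in_setU1.
  by case: eqVneq => [->|] //=; rewrite ffunE.
apply: leq_trans (leq_imset_card _ _) _.
rewrite mulnC -cardsT -(cardsX (proj C X) [set: A]).
apply/subset_leq_card/subsetP => _ /imsetP [c cC ->].
by rewrite in_setX in_setT andbT; apply: imset_f.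
Qed.

Lemma card_proj_setU1_eqS C D X x : D \subset C ->
  #|proj C (x |: X)| = #|proj C X| -> #|proj D (x |: X)| = #|proj D X|.
Proof.
move=> sDC eqC.
have injC : {in proj C (x |: X) &, injective (restrict X)}.
  by apply/imset_injP; rewrite -proj_setU1 eqC.
rewrite (proj_setU1 D X x); apply/esym/eqP/imset_injP => u v uD vD.
by apply: injC; apply: (subsetP (projS _ sDC)).
Qed.

Lemma code_rank0 C : code_rank C set0 = 0.
Proof.
have : #|proj C set0| <= 1.
  rewrite -(cards1 ([ffun _ => None] : {ffun 'I_n -> option A})).
  apply/subset_leq_card/subsetP => _ /imsetP [c _ ->].
  by rewrite in_set1; apply/eqP/ffunP => i; rewrite !ffunE in_set0.
by rewrite /code_rank; case: #|_| => [|[|]] // _; rewrite ?trunc_log0 ?trunc_log1.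
Qed.

Lemma code_rankS C D X : D \subset C -> code_rank D X <= code_rank C X.
Proof. by move=> sDC; apply/leq_trunc_log/subset_leq_card/projS. Qed.

Lemma code_rank_setU1_ge C X x : code_rank C X <= code_rank C (x |: X).
Proof. exact/leq_trunc_log/card_proj_setU1_ge. Qed.

Definition rank_gain C X x := code_rank C (x |: X) - code_rank C X.

Hypothesis A1 : 1 < #|A|.

Lemma card_proj_code_rank C X : almost_affine C -> #|proj C X| = #|A| ^ code_rank C X.
Proof. by move=> [k [_ /(_ X) [r]]]; rewrite /code_rank => ->; rewrite trunc_expnK. Qed.

Lemma rank_gain_le1 C X x : almost_affine C -> rank_gain C X x <= 1.
Proof.
move=> aC; have := card_proj_setU1_le C X x.
rewrite !card_proj_code_rank // -expnS leq_exp2l // /rank_gain; lia.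
Qed.

Lemma rank_gainS C D X x : almost_affine C -> almost_affine D -> D \subset C ->
  rank_gain D X x <= rank_gain C X x.
Proof.
move=> aC aD sDC; have [gainC0|] := eqVneq (rank_gain C X x) 0; last first.
  by have := rank_gain_le1 X x aD; lia.
have eqC : #|proj C (x |: X)| = #|proj C X|.
  have := code_rank_setU1_ge C X x.
  by rewrite !card_proj_code_rank // => ?; congr (_ ^ _); move: gainC0; rewrite /rank_gain; lia.
by rewrite /rank_gain /code_rank (card_proj_setU1_eqS sDC eqC) subnn.
Qed.

End CodeRank.

Local Open Scope ring_scope.

Lemma alternating_sum_bounds (R : numDomainType) (a : nat -> R) m :
  (forall i, 0 <= a i) -> (forall i, (0 < i < m)%N -> a i.+1 <= a i) ->
  0 <= \sum_(1 <= i < m.+1) (-1) ^+ i.+1 * a i <= a 1.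
Proof.
elim: m a => [|m IH] a a_ge0 a_decr; first by rewrite big_geq // lexx a_ge0.
rewrite big_nat_recl // expr2 mulrN1 opprK mul1r.
have -> : \sum_(1 <= i < m.+1) (-1) ^+ i.+2 * a i.+1 =
          - \sum_(1 <= i < m.+1) (-1) ^+ i.+1 * a i.+1.
  by rewrite -sumrN; apply: eq_bigr => i _; rewrite exprS mulN1r mulNr.
have /andP [S_ge0 S_le] : 0 <= \sum_(1 <= i < m.+1) (-1) ^+ i.+1 * a i.+1 <= a 2.
  by apply: (IH (a \o succn)) => [i|i /andP [_ im]]; [apply: a_ge0|apply: a_decr].
have S_le_a1 : \sum_(1 <= i < m.+1) (-1) ^+ i.+1 * a i.+1 <= a 1.
  case: m {IH} a_decr S_ge0 S_le => [|m] a_decr S_ge0 S_le.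
    by rewrite big_geq // a_ge0.
  exact: le_trans S_le (a_decr 1 isT).
by rewrite subr_ge0 S_le_a1 lerBlDr lerDl S_ge0.
Qed.

Lemma flag_rho_setU1 (A : finType) (n m : nat) (C : nat -> {set word A n}) X x :
  flag_rho m C (x |: X) =
  flag_rho m C X + \sum_(1 <= i < m.+1) (-1) ^+ i.+1 * (rank_gain (C i) X x)%:Z.
Proof.
rewrite /flag_rho -big_split /=; apply: eq_big_nat => i _.
by rewrite /rank_gain -subzn ?code_rank_setU1_ge // mulrBr addrC subrK.
Qed.

Theorem mainTheorem5 (A : finType) (n m : nat) (C : nat -> {set word A n}) :
  (1 < #|A|)%N -> flag m C -> demi_matroid (flag_rho m C).
Proof.
move=> A1 [aaC subC]; split.
- move=> X; have /andP [] // : 0 <= flag_rho m C X <= (code_rank (C 1) X)%:Z.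
  apply: alternating_sum_bounds => [//|i /andP [i0 im]].
  by have [_ _ sC] := subC i i0 im; rewrite lez_nat code_rankS.
- by rewrite /flag_rho big1 // => i _; rewrite code_rank0 mulr0.
move=> X x; rewrite flag_rho_setU1 lerDl lerD2l.
have /andP [-> gains_le] : 0 <= \sum_(1 <= i < m.+1) (-1) ^+ i.+1 * (rank_gain (C i) X x)%:Z
                               <= (rank_gain (C 1) X x)%:Z.
  apply: alternating_sum_bounds => [//|i /andP [i0 im]].
  by have [aCi aCi1 sC] := subC i i0 im; rewrite lez_nat rank_gainS.
split=> //; case: m aaC {subC} gains_le => [|m] aaC; first by rewrite big_geq.
move=> gains_le; apply: le_trans gains_le _.
by have := rank_gain_le1 A1 X x (aaC 1%N isT); rewrite -lez_nat.
Qed.
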